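(* Assume the combination is perfect, and let $l$ be such that the indices $l_{\pm a}$, $\bar l_{\pm b}$ involved exist. Then: (1) $Q^{(l)}_{+a}=\sum_{a'}A^{(l)}_{+a,a'}w_{1,a'}$ is the linear form of the unique polynomials with $\deg A^{(l)}_{+a,a'}\le(\vec\nu_1(l-1)+\vec e_{1,a})_{a'}-1$, $A^{(l)}_{+a,a}$ monic of degree $\nu_{1,a}(l-1)$, and $\int Q^{(l)}_{+a}w_{2,b}x^kd\mu=0$ for $0\le k\le\nu_{2,b}(l-1)-1$, $b=1,\dots,p_2$ (type II normalized mixed multiple orthogonal system for $[\vec\nu_1(l-1)+\vec e_{1,a};\vec\nu_2(l-1)]$). (2) $Q^{(l)}_{-b}=\sum_{a'}A^{(l)}_{-b,a'}w_{1,a'}$ is the linear form of the unique polynomials with $\deg A^{(l)}_{-b,a'}\le\nu_{1,a'}(l)-1$ and $\int Q^{(l)}_{-b}w_{2,b'}x^kd\mu=\delta_{b,b'}\delta_{k,\nu_{2,b}(l)-1}$ for $0\le k\le\nu_{2,b'}(l)-1$, $b'=1,\dots,p_2$ (type I normalized system for $[\vec\nu_1(l);\vec\nu_2(l)-\vec e_{2,b}]$). (3) $\bar Q^{(l)}_{+b}=\sum_{b'}\bar A^{(l)}_{+b,b'}w_{2,b'}$ is the linear form of the unique polynomials with $\deg\bar A^{(l)}_{+b,b'}\le(\vec\nu_2(l-1)+\vec e_{2,b})_{b'}-1$, $\bar A^{(l)}_{+b,b}$ monic of degree $\nu_{2,b}(l-1)$, and $\int\bar Q^{(l)}_{+b}w_{1,a}x^kd\mu=0$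 for $0\le k\le\nu_{1,a}(l-1)-1$, $a=1,\dots,p_1$ (type II system for $[\vec\nu_2(l-1)+\vec e_{2,b};\vec\nu_1(l-1)]$). (4) $\bar Q^{(l)}_{-a}=\sum_{b'}\bar A^{(l)}_{-a,b'}w_{2,b'}$ is the linear form of the unique polynomials with $\deg\bar A^{(l)}_{-a,b'}\le\nu_{2,b'}(l)-1$ and $\int\bar Q^{(l)}_{-a}w_{1,a'}x^kd\mu=\delta_{a,a'}\delta_{k,\nu_{1,a}(l)-1}$ for $0\le k\le\nu_{1,a'}(l)-1$, $a'=1,\dots,p_1$ (type I system for $[\vec\nu_2(l);\vec\nu_1(l)-\vec e_{1,a}]$).
   Context: Setting: $\mu$ finite Borel measure on an interval $\Delta$ with infinitely many support points, not changing sign; weights $w_{1,a}$ ($a\le p_1$), $w_{2,b}$ ($b\le p_2$) real integrable, not changing sign; compositions $\vec n_\ell\in\mathbb N^{p_\ell}$. Each $i\in\mathbb Z_+$ is uniquely $i=q|\vec n_\ell|+n_{\ell,1}+\dots+n_{\ell,a-1}+r$ ($0\le r<n_{\ell,a}$); $a_\ell(i)=a$, $k_\ell(i)=qn_{\ell,a}+r$. Degree vectors $\nu_{\ell,a}(i)=\#\{0\le j\le i:a_\ell(j)=a\}$, $\vec\nu_\ell(-1)=0$; $\vec e_{\ell,a}$ is the $a$-th unit vector of $\mathbb Z^{p_\ell}$. $\chi_{\ell,a}(x)$: semi-infinite vector with $i$-th entry $x^{k_\ell(i)}$ if $a_\ell(i)=a$, else $0$; $(i)$ = $i$-th entry, $[l]$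 = first $l$ entries. Moment matrix $g_{i,j}=\int x^{k_1(i)+k_2(j)}w_{1,a_1(i)}w_{2,a_2(j)}d\mu$, $g^{[l]}=(g_{i,j})_{i,j<l}$. Perfect: for $|\vec\nu_1|=|\vec\nu_2|+1$, nontrivial $A_a$ with $\deg A_a\le\nu_{1,a}-1$ and $\int\sum_aA_aw_{1,a}w_{2,b}x^jd\mu=0$ ($j<\nu_{2,b}$, all $b$) force $\deg A_a=\nu_{1,a}-1$ for all $a$; then all $\det g^{[l]}\neq0$. $l_{+a}$ ($l_{-a}$) is the smallest (largest) integer $\ge l$ ($\le l$) with $a_1=a$; $\bar l_{\pm b}$ likewise with $a_2=b$. Associated polynomials: $A^{(l)}_{+a,a'}(y)=\chi_{1,a'}^{(l_{+a})}(y)-(g_{l_{+a},0},\dots,g_{l_{+a},l-1})(g^{[l]})^{-1}\chi_{1,a'}^{[l]}(y)$; $\bar A^{(l)}_{-a,b'}(x)=(\chi_{2,b'}^{[l+1]}(x))^\top(g^{[l+1]})^{-1}e_{l_{-a}}$; $A^{(l)}_{-b,a'}(y)=e_{\bar l_{-b}}^\top(g^{[l+1]})^{-1}\chi_{1,a'}^{[l+1]}(y)$; $\bar A^{(l)}_{+b,b'}(x)=\chi_{2,b'}^{(\bar l_{+b})}(x)-(\chi_{2,b'}^{[l]}(x))^\top(g^{[l]})^{-1}(g_{0,\bar l_{+b}},\dots,g_{l-1,\bar l_{+b}})^\top$ ($e_j$ canonical basis vectors of $\mathbb R^{l+1}$). *)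

From HB Require Import structures.
From mathcomp Require Import all_boot all_order all_algebra.
From mathcomp Require Import all_classical all_reals all_analysis.
Set Implicit Arguments. Unset Strict Implicit. Unset Printing Implicit Defensive.
Import Order.TTheory GRing.Theory Num.Theory.
Local Open Scope classical_set_scope.
Local Open Scope ring_scope.

(* Combinatorics of a composition n : 'I_p -> nat (entries n_1..n_p,  *)
(* here indexed 0..p-1).  Indices a are handled as nats internally.   *)
Section Composition.
Variables (p : nat) (n : 'I_p -> nat).

Definition ctotal : nat := (\sum_(b < p) n b)%N.
(* n_a for a nat index (0 outside range) *)
Definition cnth (a : nat) : nat := oapp n 0%N (insub a).
(* n_1 + ... + n_{a} (0-based: sum of n_b, b < a) *)
Definition cpsum (a : nat) : nat := (\sum_(b < p | (b < a)%N) n b)%N.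
(* a(i) (0-based): the block containing i mod |n| *)
Definition aidx (i : nat) : nat :=
  find (fun a => (i %% ctotal < cpsum a.+1)%N) (iota 0 p).
Definition kidx (i : nat) : nat :=
  ((i %/ ctotal) * cnth (aidx i) + (i %% ctotal - cpsum (aidx i)))%N.
(* nuc a m = #{0 <= j < m : a(j) = a};  so nu_a(i) = nuc a i.+1 and
   nu_a(l-1) = nuc a l (with nu(-1) = 0). *)
Definition nuc (a : nat) (m : nat) : nat :=
  count (fun j => aidx j == a) (iota 0 m).
(* l_{+a}: smallest j >= l with a(j) = a (exists since n > 0 entrywise) *)
Definition lplus (a l : nat) : nat :=
  (l + find (fun d => aidx (l + d) == a) (iota 0 ctotal))%N.
(* l_{-a}: largest j <= l with a(j) = a (meaningful when it exists) *)
Definition lminus (a l : nat) : nat :=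
  (l - find (fun d => aidx (l - d) == a) (iota 0 l.+1))%N.
Definition lminus_exists (a l : nat) : Prop :=
  exists j, (j <= l)%N /\ aidx j = a.
End Composition.

Section Analytic.
Variable R : realType.
Variable mu : {measure set R -> \bar R}.
Variable s : R.          (* sign of mu : s = 1 or s = -1 *)
Variable D : set R.

Definition sint (f : R -> R) : R := s * Rintegral mu D f.

Definition support_point (x : R) : Prop :=
  forall e : R, 0 < e ->
    (0%R%:E < mu [set y : R | (x - e < y < x + e)%R])%E.

Section Weights.
Variables (p1 p2 : nat) (w1 : 'I_p1 -> R -> R) (w2 : 'I_p2 -> R -> R).

Definition perfect : Prop :=
  forall (nu1 : 'I_p1 -> nat) (nu2 : 'I_p2 -> nat) (A : 'I_p1 -> {poly R}),
    (\sum_(a < p1) nu1 a)%N = (\sum_(b < p2) nu2 b).+1 ->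
    (exists a, A a != 0) ->
    (forall a, (size (A a) <= nu1 a)%N) ->
    (forall b (j : nat), (j < nu2 b)%N ->
        sint (fun x => (\sum_(a < p1) (A a).[x] * w1 a x) * w2 b x * x ^+ j) = 0) ->
    forall a, size (A a) = nu1 a.

Variables (n1 : 'I_p1 -> nat) (n2 : 'I_p2 -> nat).

Definition wext (p : nat) (w : 'I_p -> R -> R) (a : nat) (x : R) : R :=
  oapp (fun b => w b x) 0 (insub a).

Definition gmom (i j : nat) : R :=
  sint (fun x => x ^+ (kidx n1 i + kidx n2 j)
                 * wext w1 (aidx n1 i) x * wext w2 (aidx n2 j) x).

Definition Gmat (m : nat) : 'M[R]_m := \matrix_(i < m, j < m) gmom i j.

(* i-th entry of chi_{l,a}, as a polynomial *)
Definition chi (p : nat) (n : 'I_p -> nat) (a : nat) (i : nat) : {poly R} :=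
  if aidx n i == a then 'X^(kidx n i) else 0.

Definition Aplus (l : nat) (a a' : 'I_p1) : {poly R} :=
  chi n1 a' (lplus n1 a l)
  - \sum_(i < l) \sum_(j < l)
      (gmom (lplus n1 a l) i * invmx (Gmat l) i j) *: chi n1 a' j.

Definition Abarminus (l : nat) (a : 'I_p1) (b' : 'I_p2) : {poly R} :=
  \sum_(i < l.+1) invmx (Gmat l.+1) i (inord (lminus n1 a l)) *: chi n2 b' i.

Definition Aminus (l : nat) (b : 'I_p2) (a' : 'I_p1) : {poly R} :=
  \sum_(j < l.+1) invmx (Gmat l.+1) (inord (lminus n2 b l)) j *: chi n1 a' j.

Definition Abarplus (l : nat) (b b' : 'I_p2) : {poly R} :=
  chi n2 b' (lplus n2 b l)
  - \sum_(i < l) \sum_(j < l)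
      (invmx (Gmat l) i j * gmom j (lplus n2 b l)) *: chi n2 b' i.
End Weights.

(* Mixed multiple orthogonality conditions, generic in the roles of the
   two families of weights: the linear form is sum_c B c * v c, tested
   against u d x^k.  *)
Section Systems.
Variables (p q : nat) (v : 'I_p -> R -> R) (u : 'I_q -> R -> R).

Definition linform (B : 'I_p -> {poly R}) (x : R) : R :=
  \sum_(c < p) (B c).[x] * v c x.

Definition typeII_system (nu : 'I_p -> nat) (c0 : 'I_p) (m : 'I_q -> nat)
    (B : 'I_p -> {poly R}) : Prop :=
  [/\ forall c, (size (B c) <= nu c + (c == c0))%N,
      B c0 \is monic,
      size (B c0) = (nu c0).+1 &
      forall (d : 'I_q) (k : nat), (k < m d)%N ->
        sint (fun x => linform B x * u d x * x ^+ k) = 0].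

Definition typeI_system (nu : 'I_p -> nat) (m : 'I_q -> nat) (d0 : 'I_q)
    (B : 'I_p -> {poly R}) : Prop :=
  (forall c, (size (B c) <= nu c)%N) /\
  forall (d : 'I_q) (k : nat), (k < m d)%N ->
    sint (fun x => linform B x * u d x * x ^+ k) =
      (if (d == d0) && (k == (m d0).-1) then 1 else 0).

Definition unique_solution (P : ('I_p -> {poly R}) -> Prop)
    (B : 'I_p -> {poly R}) : Prop :=
  P B /\ forall B', P B' -> forall c, B' c = B c.
End Systems.
End Analytic.

From HB Require Import structures.
From mathcomp Require Import all_boot all_order all_algebra.
From mathcomp Require Import all_classical all_reals all_analysis.
From mathcomp Require Import zify ring.
Set Implicit Arguments. Unset Strict Implicit. Unset Printing Implicit Defensive.
Import Order.TTheory GRing.Theory Num.Theory.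
Local Open Scope classical_set_scope.
Local Open Scope ring_scope.

(* Write a family [A_a], [deg A_a < nu_{1,a}(m)], in the monomials [chi_{1,a}(i)],
   [i < m]: the conditions [int (sum_a A_a w_{1,a}) w_{2,b} x^k dmu = 0],
   [k < nu_{2,b}(m)], become the linear system [c g^[m] = 0] for its coefficient
   row [c].  Perfectness says this system has only the trivial solution, so [g^[m]]
   is invertible.  The formula for [A_{+a}] subtracts from the monomial of block [a]
   at [l_{+a}] the combination with the same first [l] moments, while [A_{-b}] has
   the row [l_{-b}] of [(g^[l+1])^-1] as coefficients, so that its moments form a
   row of the identity.  A difference of two solutions solves the homogeneous
   system, whence uniqueness.  Exchanging the two families of weights transposes
   [g], which turns (1) and (2) into (3) and (4). *)

Lemma find_iota0P (P : pred nat) N : has P (iota 0 N) ->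
  [/\ (find P (iota 0 N) < N)%N, P (find P (iota 0 N)) &
      forall x, (x < find P (iota 0 N))%N -> ~~ P x].
Proof.
move=> hasP; have fN : (find P (iota 0 N) < N)%N by move: hasP; rewrite has_find size_iota.
split=> //; first by have := nth_find 0 hasP; rewrite nth_iota.
by move=> x xf; have := before_find 0 xf; rewrite nth_iota ?(ltn_trans xf) // => ->.
Qed.

Section Composition.
Variables (p : nat) (n : 'I_p -> nat).
Hypotheses (p_gt0 : (0 < p)%N) (n_gt0 : forall a, (0 < n a)%N).
Local Open Scope nat_scope.

Lemma cnth_ord (a : 'I_p) : cnth n a = n a.
Proof. by rewrite /cnth valK. Qed.

Lemma cpsumS a : cpsum n a.+1 = cpsum n a + cnth n a.
Proof.
rewrite /cpsum !(big_mkcond (fun b : 'I_p => b < _)) /=.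
rewrite (eq_bigr (fun b : 'I_p =>
  (if b < a then n b else 0) + (if val b == a then n b else 0))); last first.
  by move=> b _; rewrite ltnS; case: (ltngtP b a) => h; rewrite ?addn0.
rewrite big_split /=; congr (_ + _).
rewrite /cnth; case: insubP => [a' _ <-|] /=.
  rewrite (bigD1 a') //= eqxx big1 ?addn0 // => b /negPf nb.
  by rewrite -(inj_eq val_inj) in nb; rewrite nb.
move=> ap; rewrite big1 // => b _; case: eqP => // ba.
by move: ap; rewrite -ba ltn_ord.
Qed.

Lemma leq_cpsum a b : a <= b -> cpsum n a <= cpsum n b.
Proof.
move/subnK <-; elim: (b - a) => [|k IH] //=.
by rewrite addSn cpsumS; exact: leq_trans IH (leq_addr _ _).
Qed.

Lemma cpsum_ctotal a : p <= a -> cpsum n a = ctotal n.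
Proof.
move=> pa; rewrite /cpsum /ctotal; apply: eq_bigl => b.
by rewrite (leq_trans (ltn_ord b) pa).
Qed.

Lemma cpsum_le_ctotal a : cpsum n a <= ctotal n.
Proof.
case: (leqP p a) => pa; first by rewrite cpsum_ctotal.
by rewrite -(cpsum_ctotal (leqnn p)) leq_cpsum // ltnW.
Qed.

Lemma ctotal_gt0 : 0 < ctotal n.
Proof.
rewrite /ctotal (bigD1 (Ordinal p_gt0)) //=.
exact: leq_trans (n_gt0 _) (leq_addr _ _).
Qed.

Lemma has_cpsum_gt i : has (fun a => i %% ctotal n < cpsum n a.+1) (iota 0 p).
Proof.
apply/hasP; exists p.-1; first by rewrite mem_iota /= add0n prednK // leqnn.
by rewrite prednK // cpsum_ctotal // ltn_mod ctotal_gt0.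
Qed.

Lemma aidx_lt i : aidx n i < p.
Proof. by have [] := find_iota0P (has_cpsum_gt i). Qed.

Lemma aidx_spec i a : a < p ->
  (aidx n i == a) = (cpsum n a <= i %% ctotal n < cpsum n a.+1).
Proof.
move=> ap; have [fp Pf bf] := find_iota0P (has_cpsum_gt i).
rewrite /aidx; set f := find _ _ in fp Pf bf *.
apply/eqP/andP => [fa|[h1 h2]].
  split; last by rewrite -fa.
  case: a ap fa => [|a] ap fa; first by rewrite /cpsum big_pred0.
  by rewrite leqNgt; apply: bf; rewrite fa.
have [fa|af|//] := ltngtP f a.
  by move: Pf => /leq_trans/(_ (leq_cpsum fa)); rewrite ltnNge h1.
by have := bf _ af; rewrite h2.
Qed.

Lemma nucS a m : nuc n a m.+1 = nuc n a m + (aidx n m == a).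
Proof. by rewrite /nuc -addn1 iotaD count_cat /= addn0. Qed.

Lemma nucD a m d :
  nuc n a (m + d) = nuc n a m + count (fun j => aidx n j == a) (iota m d).
Proof. by rewrite /nuc iotaD count_cat. Qed.

Lemma leq_nuc a m m' : m <= m' -> nuc n a m <= nuc n a m'.
Proof. by move/subnK <-; rewrite addnC nucD leq_addr. Qed.

Lemma nucE (a : 'I_p) m :
  nuc n a m = (m %/ ctotal n) * n a + minn (m %% ctotal n - cpsum n a) (n a).
Proof.
have T0 := ctotal_gt0; have hb := cpsumS a; rewrite cnth_ord in hb.
have hT := cpsum_le_ctotal a.+1; have na0 := n_gt0 a.
elim: m => [|m IH]; first by rewrite /nuc /= div0n mod0n sub0n mul0n min0n.
rewrite nucS IH (aidx_spec _ (ltn_ord a)) hb.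
set T := ctotal n in T0 hT *.
have -> : m.+1 = m %/ T * T + (m %% T).+1 by rewrite {1}(divn_eq m T) addnS.
rewrite divnMDl // modnMDl.
have : m %% T < T by rewrite ltn_mod.
move: (m %/ T) (m %% T) => q r rT.
case: (ltnP r.+1 T) => h.
  rewrite divn_small // modn_small // addn0.
  by case: (boolP (cpsum n a <= r < cpsum n a + n a)) => /= hh; lia.
have -> : r.+1 = T by apply/eqP; rewrite eqn_leq h rT.
rewrite divnn modnn T0 sub0n min0n addn0 mulnDl mul1n.
by case: (boolP (cpsum n a <= r < cpsum n a + n a)) => /= hh; lia.
Qed.

Lemma nuc_period (a : 'I_p) m : nuc n a (m + ctotal n) = nuc n a m + n a.
Proof.
by rewrite !nucE divnDr ?dvdnn // divnn ctotal_gt0 modnDr mulnDl mul1n addnAC.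
Qed.

Lemma kidx_nuc i : kidx n i = nuc n (aidx n i) i.
Proof.
have ap := aidx_lt i.
rewrite (nucE (Ordinal ap)) /kidx -(cnth_ord (Ordinal ap)) /=.
have := eqxx (aidx n i); rewrite (aidx_spec _ ap) cpsumS => /andP[h1 h2].
congr (_ + _); apply/esym/minn_idPl; lia.
Qed.

Lemma kidx_lt j m : j < m -> kidx n j < nuc n (aidx n j) m.
Proof.
move=> jm; rewrite kidx_nuc; apply: leq_trans (leq_nuc _ jm).
by rewrite nucS eqxx addn1.
Qed.

Lemma kidx_inj j j' : aidx n j = aidx n j' -> kidx n j = kidx n j' -> j = j'.
Proof.
wlog jj : j j' / j <= j'.
  move=> H e1 e2; case: (leqP j j') => h; first exact: H.
  by apply/esym/H => //; apply: ltnW.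
move=> e1 e2; case: (ltngtP j j') jj => // h _.
by have := kidx_lt h; rewrite e1 e2 {1}kidx_nuc ltnn.
Qed.

Lemma kidx_surj a m k : k < nuc n a m ->
  exists2 j, j < m & aidx n j = a /\ kidx n j = k.
Proof.
elim: m => [|m IH] //; rewrite nucS; case: (ltnP k (nuc n a m)) => h1 h2.
  by have [j jm hj] := IH h1; exists j => //; apply: ltn_trans jm _.
case: (aidx n m =P a) h2 => [e|_] /= h2; last by lia.
by exists m => //; split => //; rewrite kidx_nuc e; lia.
Qed.

Lemma sum_nuc m : \sum_(a < p) nuc n a m = m.
Proof.
elim: m => [|m IH]; first by rewrite big1.
rewrite (eq_bigr (fun a : 'I_p => nuc n a m + (aidx n m == a))); last by move=> a _; rewrite nucS.
rewrite big_split /= IH (bigD1 (Ordinal (aidx_lt m))) //= eqxx big1 ?addn0 ?addn1 //.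
move=> b hb; case: eqP => // e; case/eqP: hb.
by apply: val_inj; rewrite /= e.
Qed.

Lemma lplus_spec (a : 'I_p) l :
  aidx n (lplus n a l) = a /\ kidx n (lplus n a l) = nuc n a l.
Proof.
set P := fun d => aidx n (l + d) == a.
have hasPf : has P (iota 0 (ctotal n)).
  have : nuc n a l < nuc n a (l + ctotal n) by rewrite nuc_period -addn1 leq_add2l.
  rewrite nucD -ltn_subLR // subnn -has_count.
  by rewrite -[l in iota l]addn0 iotaDl has_map.
have [_ Pf bf] := find_iota0P hasPf.
rewrite /lplus -/P; set f := find _ _ in Pf bf *.
have e : aidx n (l + f) = a by apply/eqP.
split => //; rewrite kidx_nuc e nucD; apply/eqP; rewrite -{2}[nuc n a l]addn0 eqn_add2l.
rewrite -leqn0 leqNgt -has_count; apply/hasP => -[j]; rewrite mem_iota => /andP[lj jf] hj.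
by have := bf (j - l); rewrite /P subnKC // hj => /(_ _) /negP; apply => //; lia.
Qed.

Lemma lminus_spec (a : 'I_p) l : lminus_exists n a l ->
  [/\ aidx n (lminus n a l) = a, lminus n a l <= l &
      kidx n (lminus n a l) = (nuc n a l.+1).-1].
Proof.
move=> [j0 [j0l hj0]]; set P := fun d => aidx n (l - d) == a.
have hasPf : has P (iota 0 l.+1).
  apply/hasP; exists (l - j0); first by rewrite mem_iota /=; lia.
  by rewrite /P subKn // hj0.
have [fT Pf bf] := find_iota0P hasPf.
rewrite /lminus -/P; set f := find _ _ in Pf bf fT *.
have e : aidx n (l - f) = a by apply/eqP.
have -> : nuc n a l.+1 = (nuc n a (l - f)).+1.
  have -> : l.+1 = (l - f).+1 + f by lia.
  rewrite nucD nucS e eqxx addn1; apply/eqP; rewrite -{2}[_.+1]addn0 eqn_add2l.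
  rewrite -leqn0 leqNgt -has_count; apply/hasP => -[j]; rewrite mem_iota => /andP[lj jf] hj.
  have := bf (l - j); rewrite /P subKn; last by lia.
  by rewrite hj => /(_ _) /negP; apply => //; lia.
by split; rewrite ?leq_subr // kidx_nuc e.
Qed.

End Composition.

Section Moments.
Variables (R : realType) (mu : {measure set R -> \bar R}) (s : R) (D : set R).
Hypothesis mD : measurable D.

Lemma integrable_sumR (I : Type) (r : seq I) (F : I -> R -> R) :
  (forall i, mu.-integrable D (EFin \o F i)) ->
  mu.-integrable D (EFin \o (fun x => \sum_(i <- r) F i x)).
Proof.
move=> hF; apply: (eq_integrable mD (fun x => (\sum_(i <- r) (F i x)%:E)%E)).
  by move=> x _; rewrite /= sumEFin.
by apply: integrable_sum => // i _; exact: hF.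
Qed.

Lemma Rintegral_sum (I : Type) (r : seq I) (F : I -> R -> R) :
  (forall i, mu.-integrable D (EFin \o F i)) ->
  \int[mu]_(x in D) (\sum_(i <- r) F i x) = \sum_(i <- r) \int[mu]_(x in D) F i x.
Proof.
move=> hF; elim: r => [|i r IH].
  by under eq_fun do rewrite big_nil; rewrite Rintegral_cst // mul0r big_nil.
under eq_fun do rewrite big_cons.
by rewrite RintegralD // ?IH ?big_cons //; exact: integrable_sumR.
Qed.

Lemma integrableZR (F : R -> R) c : mu.-integrable D (EFin \o F) ->
  mu.-integrable D (EFin \o (fun x => c * F x)).
Proof.
move=> h; apply: (eq_integrable mD (fun x => (c%:E * (EFin \o F) x)%E)) => [x _ /=|].
  by rewrite EFinM.
exact: integrableZl.
Qed.

Variables (p q : nat) (v : 'I_p -> R -> R) (u : 'I_q -> R -> R).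
Hypothesis int_moments : forall c d (k : nat),
  mu.-integrable D (fun x => (x ^+ k * v c x * u d x)%:E).

Definition mom c d k := sint mu s D (fun x => x ^+ k * v c x * u d x).

Definition mom_poly c d k (P : {poly R}) : R :=
  \sum_(i < size P) P`_i * mom c d (i + k).

Lemma mom_poly_widen c d k N (P : {poly R}) : (size P <= N)%N ->
  mom_poly c d k P = \sum_(i < N) P`_i * mom c d (i + k).
Proof.
move=> hN; rewrite /mom_poly (big_ord_widen N (fun i => P`_i * mom c d (i + k))) //.
rewrite big_mkcond; apply: eq_bigr => i _; case: ltnP => // h.
by rewrite nth_default // mul0r.
Qed.

Lemma mom_poly_is_linear c d k : linear_for *%R (mom_poly c d k).
Proof.
move=> a P Q; set N := (size P + size Q)%N.
have sPQ : (size (a *: P + Q)%R <= N)%N.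
  apply: leq_trans (size_polyD _ _) _.
  by rewrite geq_max (leq_trans (size_scale_leq _ _)) ?leq_addr ?leq_addl.
rewrite !(@mom_poly_widen _ _ _ N) ?leq_addr ?leq_addl //.
rewrite mulr_sumr -big_split; apply: eq_bigr => i _.
by rewrite coefD coefZ mulrDl mulrA.
Qed.

HB.instance Definition _ c d k :=
  GRing.isLinear.Build R {poly R} R _ (mom_poly c d k) (mom_poly_is_linear c d k).

Lemma mom_polyXn c d k j : mom_poly c d k 'X^j = mom c d (j + k).
Proof.
rewrite /mom_poly size_polyXn big_ord_recr /= coefXn eqxx mul1r big1 ?add0r //.
by move=> i _; rewrite coefXn (ltn_eqF (ltn_ord i)) mul0r.
Qed.

Lemma sint_linform (B : 'I_p -> {poly R}) d k :
  sint mu s D (fun x => linform v B x * u d x * x ^+ k) =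
  \sum_c mom_poly c d k (B c).
Proof.
have term c (i : 'I_(size (B c))) : mu.-integrable D
    (EFin \o (fun x => (B c)`_i * (x ^+ (i + k) * v c x * u d x))).
  by apply: integrableZR; rewrite /comp; exact: int_moments.
rewrite /sint /linform (_ : (fun x => _) = fun x =>
  \sum_c \sum_(i < size (B c)) (B c)`_i * (x ^+ (i + k) * v c x * u d x)).
  rewrite Rintegral_sum; last by move=> c; exact: integrable_sumR.
  rewrite mulr_sumr; apply: eq_bigr => c _; rewrite Rintegral_sum //.
  rewrite mulr_sumr /mom_poly; apply: eq_bigr => i _.
  rewrite RintegralZl //; last exact: int_moments.
  by rewrite /mom /sint mulrCA.
apply: funext => x; rewrite !mulr_suml; apply: eq_bigr => c _.
rewrite horner_coef !mulr_suml; apply: eq_bigr => i _; rewrite exprD; ring.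
Qed.

End Moments.

Lemma monic_subXn (R : nzRingType) (P : {poly R}) N :
  P \is monic -> size P = N.+1 -> (size (P - 'X^N)%R <= N)%N.
Proof.
move=> mP sP; apply/leq_sizeP => j hj; rewrite coefB coefXn.
case: (ltngtP j N) hj => // h _; first by rewrite nth_default ?subr0 // sP.
by move: mP; rewrite monicE lead_coefE sP /= h => /eqP ->; rewrite subrr.
Qed.

Section Orthogonality.
Variables (R : realType) (mu : {measure set R -> \bar R}) (s : R) (D : set R).
Hypothesis mD : measurable D.
Variables (p1 p2 : nat) (w1 : 'I_p1 -> R -> R) (w2 : 'I_p2 -> R -> R)
  (n1 : 'I_p1 -> nat) (n2 : 'I_p2 -> nat).
Hypothesis int_moments : forall a b (k : nat),
  mu.-integrable D (fun x => (x ^+ k * w1 a x * w2 b x)%:E).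
Hypotheses (p1_gt0 : (0 < p1)%N) (p2_gt0 : (0 < p2)%N)
  (n1_gt0 : forall a, (0 < n1 a)%N) (n2_gt0 : forall b, (0 < n2 b)%N).

Local Notation mom12 := (mom mu s D w1 w2).
Local Notation momp := (mom_poly mu s D w1 w2).
Local Notation G := (Gmat mu s D w1 w2 n1 n2).
Local Notation g := (gmom mu s D w1 w2 n1 n2).

Definition blk1 i : 'I_p1 := Ordinal (aidx_lt p1_gt0 n1_gt0 i).
Definition blk2 j : 'I_p2 := Ordinal (aidx_lt p2_gt0 n2_gt0 j).

Lemma gmomE i j : g i j = mom12 (blk1 i) (blk2 j) (kidx n1 i + kidx n2 j).
Proof.
by rewrite /gmom /mom -[aidx n1 i]/(val (blk1 i)) -[aidx n2 j]/(val (blk2 j)) /wext !valK.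
Qed.

Lemma blk2_surj m (b : 'I_p2) k : (k < nuc n2 b m)%N ->
  exists j : 'I_m, blk2 j = b /\ kidx n2 j = k.
Proof.
move=> /(kidx_surj p2_gt0 n2_gt0) [j jm [e1 e2]].
by exists (Ordinal jm); split => //; apply: val_inj.
Qed.

Lemma sint_linform12 (B : 'I_p1 -> {poly R}) b k :
  sint mu s D (fun x => linform w1 B x * w2 b x * x ^+ k) = \sum_a momp a b k (B a).
Proof. exact: sint_linform. Qed.

Lemma sum_mompB (A B : 'I_p1 -> {poly R}) b k :
  \sum_a momp a b k (A a - B a) = \sum_a momp a b k (A a) - \sum_a momp a b k (B a).
Proof. by rewrite -sumrB; apply: eq_bigr => a _; rewrite linearB. Qed.

Definition chi_comb m (c : 'rV[R]_m) (a : 'I_p1) : {poly R} :=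
  \sum_(i < m) c 0 i *: chi R n1 a i.

Lemma coef_chi a i k :
  (chi R n1 a i)`_k = ((aidx n1 i == a) && (kidx n1 i == k))%:R.
Proof. by rewrite /chi; case: ifP => _; rewrite ?coef0 // coefXn eq_sym. Qed.

Lemma size_chi_comb m (c : 'rV_m) a : (size (chi_comb c a) <= nuc n1 a m)%N.
Proof.
apply: (big_ind (fun P : {poly R} => (size P <= nuc n1 a m)%N)).
- by rewrite size_poly0.
- by move=> P Q hP hQ; apply: leq_trans (size_polyD _ _) _; rewrite geq_max hP hQ.
move=> i _; apply: leq_trans (size_scale_leq _ _) _.
rewrite /chi; case: eqP => [e|_]; last by rewrite size_poly0.
by rewrite size_polyXn -e; apply: kidx_lt.
Qed.

Lemma coef_chi_comb m (c : 'rV_m) (i : 'I_m) : (chi_comb c (blk1 i))`_(kidx n1 i) = c 0 i.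
Proof.
rewrite /chi_comb coef_sum (bigD1 i) //= coefZ coef_chi !eqxx mulr1 big1 ?addr0 //.
move=> j ji; rewrite coefZ coef_chi.
case: andP => [[/eqP e1 /eqP e2]|_]; last by rewrite mulr0.
by case/eqP: ji; apply: val_inj; apply: (kidx_inj p1_gt0 n1_gt0 e1 e2).
Qed.

(* The [chi n1 a i], [i < m], run once through the monomials [x^k], [k < nu_a(m)]. *)
Lemma chi_combE m (A : 'I_p1 -> {poly R}) :
  (forall a, size (A a) <= nuc n1 a m)%N ->
  forall a, A a = chi_comb (\row_(i < m) (A (blk1 i))`_(kidx n1 i)) a.
Proof.
move=> hs a; apply/polyP => k; rewrite /chi_comb coef_sum.
case: (ltnP k (nuc n1 a m)) => hk.
  have [j jm [e1 e2]] := kidx_surj p1_gt0 n1_gt0 hk.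
  rewrite (bigD1 (Ordinal jm)) //= coefZ coef_chi e1 e2 !eqxx mulr1 mxE big1 ?addr0.
    by rewrite e2 (_ : blk1 j = a) //; apply: val_inj.
  move=> i ij; rewrite coefZ coef_chi.
  case: andP => [[/eqP f1 /eqP f2]|_]; last by rewrite mulr0.
  by case/eqP: ij; apply: val_inj; apply: (kidx_inj p1_gt0 n1_gt0); rewrite ?f1 ?f2.
rewrite nth_default; last exact: leq_trans (hs a) hk.
rewrite big1 // => i _; rewrite coefZ coef_chi.
case: andP => [[/eqP f1 /eqP f2]|_]; last by rewrite mulr0.
by have := kidx_lt p1_gt0 n1_gt0 (ltn_ord i); rewrite f1 f2 ltnNge hk.
Qed.

Lemma sum_momp_chi_comb m (c : 'rV_m) (j : 'I_m) :
  \sum_a momp a (blk2 j) (kidx n2 j) (chi_comb c a) = (c *m G m) 0 j.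
Proof.
under eq_bigr do rewrite /chi_comb linear_sum.
rewrite exchange_big mxE; apply: eq_bigr => i _.
under eq_bigr do rewrite linearZ /= /chi; rewrite (bigD1 (blk1 i)) //= eqxx.
rewrite mom_polyXn big1 ?addr0 => [|a ha]; first by rewrite mxE gmomE.
case: eqP => [e|_]; last by rewrite linear0 mulr0.
by case/eqP: ha; apply: val_inj; rewrite /= e.
Qed.

Definition orth_trivial m := forall A : 'I_p1 -> {poly R},
  (forall a, size (A a) <= nuc n1 a m)%N ->
  (forall (b : 'I_p2) k, (k < nuc n2 b m)%N -> \sum_a momp a b k (A a) = 0) ->
  forall a, A a = 0.

Lemma orth_trivial_unitmx m : orth_trivial m -> G m \in unitmx.
Proof.
move=> Hm; rewrite unitmxE unitfE; apply/negP => /det0P [c c_neq0 cG0].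
case/eqP: c_neq0; apply/rowP => i; rewrite mxE -(coef_chi_comb c i).
rewrite Hm ?coef0 // => [a|b k]; first exact: size_chi_comb.
move=> /blk2_surj [j [<- <-]].
by rewrite sum_momp_chi_comb cG0 mxE.
Qed.

Lemma unitmx_orth_trivial m : G m \in unitmx -> orth_trivial m.
Proof.
move=> U A hs horth a; rewrite (chi_combE hs a).
set c := \row_i _; suff -> : c = 0 by rewrite /chi_comb big1 // => i _; rewrite mxE scale0r.
rewrite -(mulmxK U c) (_ : c *m G m = 0) ?mul0mx //; apply/rowP => j; rewrite [RHS]mxE.
rewrite -sum_momp_chi_comb -[RHS](horth (blk2 j) _ (kidx_lt p2_gt0 n2_gt0 (ltn_ord j))).
by apply: eq_bigr => a' _; rewrite /c -chi_combE.
Qed.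

Lemma perfect_orth_trivial m : perfect mu s D w1 w2 -> orth_trivial m.
Proof.
move=> hP A hs horth a0; apply/eqP/negPn/negP => Aa0.
pose nu1 (a : 'I_p1) := (nuc n1 a m + (a == a0))%N.
have sum_nu1 : (\sum_a nu1 a)%N = (\sum_(b < p2) nuc n2 b m).+1.
  rewrite big_split /= !sum_nuc // (bigD1 a0) //= eqxx big1 ?addn0 ?addn1 //.
  by move=> a /negPf ->.
have size_Aa0 : size (A a0) = (nuc n1 a0 m).+1.
  rewrite (hP nu1 _ A sum_nu1 (ex_intro _ a0 Aa0)) /nu1 ?eqxx ?addn1 //.
  - by move=> a; apply: leq_trans (hs a) (leq_addr _ _).
  - by move=> b j hj; rewrite sint_linform12 horth.
by have := hs a0; rewrite size_Aa0 ltnn.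
Qed.

Lemma Aplus_typeII l (a : 'I_p1) : G l \in unitmx ->
  unique_solution
    (typeII_system mu s D w1 w2 (fun a' => nuc n1 a' l) a (fun b => nuc n2 b l))
    (Aplus mu s D w1 w2 n1 n2 l a).
Proof.
move=> U; have [aL kL] := lplus_spec p1_gt0 n1_gt0 a l.
set L := lplus n1 a l in aL kL *.
(* [c] is chosen so that [c *m g^[l]] is the row of [g] at [l_{+a}]. *)
set c := (\row_(i < l) g L i) *m invmx (G l).
have chiL (a' : 'I_p1) : chi R n1 a' L = if a' == a then 'X^(nuc n1 a l) else 0.
  rewrite /chi aL kL; case: (a' =P a) => [->|h]; first by rewrite eqxx.
  by case: eqP => // e; case: h; apply: val_inj.
have AplusE a' : Aplus mu s D w1 w2 n1 n2 l a a' = chi R n1 a' L - chi_comb c a'.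
  rewrite /Aplus /chi_comb exchange_big; congr (_ - _); apply: eq_bigr => j _.
  by rewrite -scaler_suml !mxE; congr (_ *: _); apply: eq_bigr => i _; rewrite mxE.
have size_chi_combA : (size (chi_comb c a) <= nuc n1 a l)%N := size_chi_comb c a.
have orth (b : 'I_p2) k : (k < nuc n2 b l)%N ->
    \sum_a' momp a' b k (Aplus mu s D w1 w2 n1 n2 l a a') = 0.
  move=> /blk2_surj [j [<- <-]].
  under eq_bigr do rewrite AplusE; rewrite sum_mompB sum_momp_chi_comb mulmxKV //.
  rewrite (bigD1 a) //= chiL eqxx mom_polyXn big1 => [|a' /negPf ha']; last first.
    by rewrite chiL ha' linear0.
  by rewrite addr0 mxE gmomE -kL (_ : blk1 L = a) ?subrr //; apply: val_inj.
split.
  split.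
  - move=> a'; rewrite AplusE chiL; apply: leq_trans (size_polyD _ _) _.
    rewrite geq_max size_polyN (leq_trans (size_chi_comb c a')) ?leq_addr ?andbT //.
    by case: eqP => [->|_]; rewrite ?size_polyXn ?size_poly0 ?eqxx ?addn1.
  - by rewrite AplusE chiL eqxx monicE lead_coefDl ?lead_coefXn // size_polyN size_polyXn ltnS.
  - by rewrite AplusE chiL eqxx size_polyDl ?size_polyXn // size_polyN ltnS.
  - by move=> b k hk; rewrite sint_linform12 orth.
move=> B [sB mB szB oB] a'; apply/eqP; rewrite -subr_eq0; apply/eqP; move: a'.
apply: unitmx_orth_trivial U _ _ _ => [a'|b k hk].
  rewrite AplusE chiL opprB addrA addrAC; case: eqP => [->|h].
    apply: leq_trans (size_polyD _ _) _; rewrite geq_max size_chi_combA andbT.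
    exact: monic_subXn.
  rewrite subr0; apply: leq_trans (size_polyD _ _) _.
  by rewrite geq_max size_chi_comb; have := sB a'; rewrite (introF eqP h) addn0 => ->.
by rewrite sum_mompB orth // -sint_linform12 oB // subr0.
Qed.

Lemma Aminus_typeI l (b : 'I_p2) : G l.+1 \in unitmx -> lminus_exists n2 b l ->
  unique_solution
    (typeI_system mu s D w1 w2 (fun a' => nuc n1 a' l.+1) (fun b' => nuc n2 b' l.+1) b)
    (Aminus mu s D w1 w2 n1 n2 l b).
Proof.
move=> U hex; have [bL L_le kL] := lminus_spec p2_gt0 n2_gt0 hex.
set L := lminus n2 b l in bL L_le kL.
set Li : 'I_l.+1 := inord L.
have LiE : (Li : nat) = L by rewrite /Li inordK.
have AminusE : Aminus mu s D w1 w2 n1 n2 l b = chi_comb (row Li (invmx (G l.+1))).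
  by apply: funext => a'; apply: eq_bigr => j _; rewrite mxE.
have orth (d : 'I_p2) k : (k < nuc n2 d l.+1)%N ->
    \sum_a' momp a' d k (Aminus mu s D w1 w2 n1 n2 l b a') =
    (if (d == b) && (k == (nuc n2 b l.+1).-1) then 1 else 0).
  move=> /blk2_surj [j [<- <-]].
  rewrite AminusE sum_momp_chi_comb -row_mul mulVmx // !mxE.
  suff -> : (Li == j) = (blk2 j == b) && (kidx n2 j == (nuc n2 b l.+1).-1) by case: ifP.
  apply/eqP/andP => [<-|[/eqP bj /eqP kj]].
    by split; apply/eqP; [apply: val_inj; rewrite /= LiE bL | rewrite LiE kL].
  apply: val_inj; rewrite /= LiE; apply: (kidx_inj p2_gt0 n2_gt0).
    by rewrite bL -bj.
  by rewrite kL kj.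
split.
  split; first by move=> a'; rewrite AminusE size_chi_comb.
  by move=> d k hk; rewrite sint_linform12 orth.
move=> B [sB oB] a'; apply/eqP; rewrite -subr_eq0; apply/eqP; move: a'.
apply: unitmx_orth_trivial U _ _ _ => [a'|d k hk].
  by apply: leq_trans (size_polyD _ _) _; rewrite geq_max size_polyN sB AminusE size_chi_comb.
by rewrite sum_mompB orth // -sint_linform12 oB // subrr.
Qed.

End Orthogonality.

Section Duality.
Variables (R : realType) (mu : {measure set R -> \bar R}) (s : R) (D : set R).
Variables (p1 p2 : nat) (w1 : 'I_p1 -> R -> R) (w2 : 'I_p2 -> R -> R)
  (n1 : 'I_p1 -> nat) (n2 : 'I_p2 -> nat).

Lemma gmom_swap i j :
  gmom mu s D w2 w1 n2 n1 i j = gmom mu s D w1 w2 n1 n2 j i.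
Proof. by rewrite /gmom addnC; congr sint; apply: funext => x; rewrite mulrAC. Qed.

Lemma Gmat_swap m : Gmat mu s D w2 w1 n2 n1 m = (Gmat mu s D w1 w2 n1 n2 m)^T.
Proof. by apply/matrixP => i j; rewrite !mxE gmom_swap. Qed.

Lemma Abarplus_swap l b :
  Abarplus mu s D w1 w2 n1 n2 l b = Aplus mu s D w2 w1 n2 n1 l b.
Proof.
apply: funext => b'; rewrite /Abarplus /Aplus Gmat_swap -trmx_inv; congr (_ - _).
rewrite exchange_big; apply: eq_bigr => i _; apply: eq_bigr => j _.
by rewrite !mxE gmom_swap mulrC.
Qed.

Lemma Abarminus_swap l a :
  Abarminus mu s D w1 w2 n1 n2 l a = Aminus mu s D w2 w1 n2 n1 l a.
Proof.
apply: funext => b'; rewrite /Abarminus /Aminus Gmat_swap -trmx_inv.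
by apply: eq_bigr => i _; rewrite !mxE.
Qed.

End Duality.

Unset Implicit Arguments.

Theorem proposition2p20 (R : realType) (mu : {finite_measure set R -> \bar R})
  (s : R) (Delta : interval R) (p1 p2 : nat)
  (w1 : 'I_p1 -> R -> R) (w2 : 'I_p2 -> R -> R)
  (n1 : 'I_p1 -> nat) (n2 : 'I_p2 -> nat) (l : nat) :
  (s = 1 \/ s = -1) ->
  mu (~` [set` Delta]) = 0%E ->
  infinite_set [set x | support_point mu x] ->
  (forall a, mu.-integrable [set` Delta] (fun x => (w1 a x)%:E)) ->
  (forall b, mu.-integrable [set` Delta] (fun x => (w2 b x)%:E)) ->
  (forall a, (forall x, x \in Delta -> 0 <= w1 a x) \/
             (forall x, x \in Delta -> w1 a x <= 0)) ->
  (forall b, (forall x, x \in Delta -> 0 <= w2 b x) \/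
             (forall x, x \in Delta -> w2 b x <= 0)) ->
  (forall a b (k : nat),
     mu.-integrable [set` Delta] (fun x => (x ^+ k * w1 a x * w2 b x)%:E)) ->
  (0 < p1)%N -> (0 < p2)%N ->
  (forall a, (0 < n1 a)%N) -> (forall b, (0 < n2 b)%N) ->
  perfect mu s [set` Delta] w1 w2 ->
  (forall a : 'I_p1,
     unique_solution
       (typeII_system mu s [set` Delta] w1 w2 (fun a' => nuc n1 a' l) a
                      (fun b => nuc n2 b l))
       (Aplus mu s [set` Delta] w1 w2 n1 n2 l a)) /\
  (forall b : 'I_p2, lminus_exists n2 b l ->
     unique_solution
       (typeI_system mu s [set` Delta] w1 w2 (fun a' => nuc n1 a' l.+1)
                     (fun b' => nuc n2 b' l.+1) b)
       (Aminus mu s [set` Delta] w1 w2 n1 n2 l b)) /\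
  (forall b : 'I_p2,
     unique_solution
       (typeII_system mu s [set` Delta] w2 w1 (fun b' => nuc n2 b' l) b
                      (fun a => nuc n1 a l))
       (Abarplus mu s [set` Delta] w1 w2 n1 n2 l b)) /\
  (forall a : 'I_p1, lminus_exists n1 a l ->
     unique_solution
       (typeI_system mu s [set` Delta] w2 w1 (fun b' => nuc n2 b' l.+1)
                     (fun a' => nuc n1 a' l.+1) a)
       (Abarminus mu s [set` Delta] w1 w2 n1 n2 l a)).
Proof.
move=> _ _ _ _ _ _ _ int12 p1_gt0 p2_gt0 n1_gt0 n2_gt0 hP.
have mD : measurable [set` Delta] := measurable_itv Delta.
have int21 b a k :
    mu.-integrable [set` Delta] (fun x => (x ^+ k * w2 b x * w1 a x)%:E).
  by apply: (eq_integrable mD _ _ _ (int12 a b k)) => x _; rewrite mulrAC.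
have unitG12 m : Gmat mu s [set` Delta] w1 w2 n1 n2 m \in unitmx.
  by apply: orth_trivial_unitmx => //; exact: perfect_orth_trivial.
have unitG21 m : Gmat mu s [set` Delta] w2 w1 n2 n1 m \in unitmx.
  by rewrite Gmat_swap unitmx_tr.
split; [|split; [|split]] => [a|b|b|a].
- exact: Aplus_typeII.
- exact: Aminus_typeI.
- by rewrite Abarplus_swap; exact: Aplus_typeII.
- by rewrite Abarminus_swap; exact: Aminus_typeI.
Qed.
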